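(* In $\mathcal H_{n,r}$ we have (1) $g_ig_j=g_jg_i$ for $1\le i,j\le n-1$ with $|i-j|>1$, and (2) $g_ig_{i+1}g_i=g_{i+1}g_ig_{i+1}$ for $1\le i\le n-2$.
   Context: Standing setup: $R$ is an integral domain, $n\ge 2$, $r\ge 1$, and $q,u_1,\ldots,u_r\in R$ with $q$ invertible in $R$ and $\Delta:=\prod_{1\le j<i\le r}(u_i-u_j)$ invertible in $R$. For $1\le c\le r$ let $F_c(X)\in R[X]$ be the unique polynomial of degree $\le r-1$ with $F_c(u_{c'})=\delta_{c,c'}\Delta$ for all $1\le c'\le r$. The modified Ariki–Koike (Shoji) algebra $\mathcal H_{n,r}=\mathcal H_{n,r}(R,q,u_1,\ldots,u_r)$ is the associative $R$-algebra generated by $t_1,\ldots,t_n,T_1,\ldots,T_{n-1}$ subject to: $(T_i-q)(T_i+q^{-1})=0$; $(t_i-u_1)\cdots(t_i-u_r)=0$; $T_iT_{i+1}T_i=T_{i+1}T_iT_{i+1}$; $T_iT_j=T_jT_i$ for $|i-j|\ge2$; $t_it_j=t_jt_i$; $T_jt_k=t_kT_j$ for $k\ne j,j+1$; and for $2\le j\le n$: $T_{j-1}t_j=t_{j-1}T_{j-1}+\Delta^{-2}\sum_{1\le c_1<c_2\le r}(u_{c_2}-u_{c_1})(q-q^{-1})F_{c_1}(t_{j-1})F_{c_2}(t_j)$ and $T_{j-1}t_{j-1}=t_jT_{j-1}-\Delta^{-2}\sum_{1\le c_1<c_2\le r}(u_{c_2}-u_{c_1})(q-q^{-1})F_{c_1}(t_{j-1})F_{c_2}(t_j)$.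 Write $[1,r]=\{1,\ldots,r\}$; for $\mathbf k=(k_1,\ldots,k_n)\in[1,r]^n$ set $b_{\mathbf k}:=\prod_{i=1}^n\prod_{1\le j\le r,\,j\ne k_i}\frac{t_i-u_j}{u_{k_i}-u_j}$. For $1\le i,j\le n$ let $B'_{i,j}:=-(q-q^{-1})\sum_{\mathbf k\in[1,r]^n,\ k_i<k_j}b_{\mathbf k}$, and for $1\le i\le n-1$ let $g_i:=T_i+B'_{i,i+1}$. *)

From HB Require Import structures.
From mathcomp Require Import all_boot all_order all_algebra.
Set Implicit Arguments. Unset Strict Implicit. Unset Printing Implicit Defensive.
Import Order.TTheory GRing.Theory Num.Theory.
Local Open Scope ring_scope.

(* Indices follow the paper: 1-based natural numbers.
   u : nat -> R is used on 1..r, t : nat -> A on 1..n, T : nat -> A on 1..n-1. *)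

Section ShojiDefs.
Variables (R : comUnitRingType) (A : algType R).

Definition Delta (r : nat) (u : nat -> R) : R :=
  \prod_(1 <= j < r.+1) \prod_(j.+1 <= i < r.+1) (u i - u j).

Definition aeval (p : {poly R}) (a : A) : A :=
  \sum_(i < size p) p`_i *: a ^+ i.

(* the value k_i (in 1..r) of k in [1,r]^n, encoded as k : 'I_n -> 'I_r
   with k_i := (k (i-1)).+1 ; returns 0 outside 1..n (never used there) *)
Definition kval (n r : nat) (k : {ffun 'I_n -> 'I_r}) (i : nat) : nat :=
  oapp (fun x : 'I_n => (k x).+1) 0%N (insub i.-1).

Definition bk (n r : nat) (u : nat -> R) (t : nat -> A) (k : {ffun 'I_n -> 'I_r}) : A :=
  \prod_(i < n) \prod_(1 <= j < r.+1 | j != (k i).+1)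
     ((u (k i).+1 - u j)^-1 *: (t i.+1 - (u j)%:A)).

Definition Bp (n r : nat) (q : R) (u : nat -> R) (t : nat -> A) (i j : nat) : A :=
  - (q - q^-1) *: \sum_(k : {ffun 'I_n -> 'I_r} | (kval k i < kval k j)%N) @bk n r u t k.

Definition gg (n r : nat) (q : R) (u : nat -> R) (t T : nat -> A) (i : nat) : A :=
  T i + Bp n r q u t i i.+1.

Definition corr (r : nat) (q : R) (u : nat -> R) (F : nat -> {poly R}) (t : nat -> A)
    (j : nat) : A :=
  (Delta r u) ^- 2 *:
    \sum_(1 <= c1 < r.+1) \sum_(c1.+1 <= c2 < r.+1)
       ((u c2 - u c1) * (q - q^-1)) *: (aeval (F c1) (t j.-1) * aeval (F c2) (t j)).

End ShojiDefs.

(* The b_k, k in [1,r]^n, are products of Lagrange idempotents in the commuting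
   elements t_1, ..., t_n, each annihilated by prod_c (X - u_c); they form a complete
   family of orthogonal idempotents with t_m b_k = u_{k_m} b_k.  Hence B'_{i,i+1} acts
   on b_k by the scalar eps_i(k) = -(q - q^-1)[k_i < k_{i+1}], and the relations between
   T_i and t_i, t_{i+1} show that g_i maps b_k A into b_{s_i k} A, where s_i exchanges
   k_i and k_{i+1}.  On b_l A one may therefore replace T_i by g_i - eps_i(l): the
   quadratic relation of T_i becomes one for g_i, and the commutation and braid
   relations of the T_i, applied to b_k, become those of the g_i once coefficients are
   compared for each relative order of k_i, k_{i+1}, k_{i+2}. *)

From HB Require Import structures.
From mathcomp Require Import all_boot all_order all_algebra.
Import Order.TTheory GRing.Theory Num.Theory.
Local Open Scope ring_scope.
From mathcomp Require Import ring zify.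

Set Implicit Arguments.
Unset Strict Implicit.
Unset Printing Implicit Defensive.

Section AlgebraEigen.
Variables (R : comUnitRingType) (A : algType R).
Implicit Types (x y : A) (a v : R) (p : {poly R}).

Lemma commrZ x y a : GRing.comm x y -> GRing.comm x (a *: y).
Proof. by move=> xy; rewrite /GRing.comm -scalerAr -scalerAl xy. Qed.

Lemma aevalE p x : aeval p x = horner_alg x p.
Proof.
rewrite -{2}[p]coefK poly_def rmorph_sum; apply: eq_bigr => i _.
by rewrite -mul_polyC rmorphM /= horner_algC rmorphXn /= horner_algX mulr_algl.
Qed.

Lemma commr_horner_alg p x y : GRing.comm x y -> GRing.comm x (horner_alg y p).
Proof.
move=> xy; rewrite -aevalE; apply: commr_sum => i _.
exact/commrZ/commrX.
Qed.

Lemma horner_alg_eigen p x y v : x * y = v *: y -> horner_alg x p * y = p.[v] *: y.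
Proof.
move=> xy; have xny m : x ^+ m * y = v ^+ m *: y.
  elim: m => [|m IHm]; first by rewrite !expr0 mul1r scale1r.
  by rewrite exprS -mulrA IHm -scalerAr xy scalerA exprS mulrC.
rewrite -aevalE /aeval mulr_suml horner_coef scaler_suml.
by apply: eq_bigr => i _; rewrite -scalerAl xny scalerA.
Qed.

Lemma mul_prod_eigen (I : eqType) (s : seq I) (E : I -> A) x j c :
  j \in s -> (forall i, GRing.comm x (E i)) -> x * E j = c *: E j ->
  x * \prod_(i <- s) E i = c *: \prod_(i <- s) E i.
Proof.
move=> + xE xEj; elim: s => [//|i s IHs]; rewrite inE big_cons => /orP[/eqP <-|js].
  by rewrite mulrA xEj scalerAl.
by rewrite mulrA xE -mulrA IHs // scalerAr.
Qed.

Lemma prod_mul_eigen (I : Type) (s : seq I) (E : I -> A) y (c : I -> R) :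
  (forall i, E i * y = c i *: y) -> (\prod_(i <- s) E i) * y = (\prod_(i <- s) c i) *: y.
Proof.
move=> Ey; elim: s => [|i s IHs]; first by rewrite !big_nil mul1r scale1r.
by rewrite !big_cons -mulrA IHs -scalerAr Ey scalerA mulrC.
Qed.

Lemma scaler_unit_eq0 a x : a \is a GRing.unit -> a *: x = 0 -> x = 0.
Proof. by move=> ua ax0; rewrite -[x]scale1r -(mulVr ua) -scalerA ax0 scaler0. Qed.

End AlgebraEigen.

Lemma Delta_unit_subr (R : comUnitRingType) (r : nat) (u : nat -> R) a b :
  Delta r u \is a GRing.unit -> (1 <= a <= r)%N -> (1 <= b <= r)%N -> a != b ->
  u a - u b \is a GRing.unit.
Proof.
move=> uD; wlog ba : a b / (b < a)%N.
  move=> wlog_ba ha hb neq; case: (ltngtP a b) => [ab|ba|eab].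
  - by rewrite -opprB unitrN wlog_ba // gtn_eqF.
  - exact: wlog_ba.
  - by rewrite eab eqxx in neq.
move=> /andP[_ ar] /andP[b1 br] _; move/unitr_prodP: uD => /(_ b).
rewrite mem_index_iota b1 ltnS br => /(_ isT isT) /unitr_prodP /(_ a).
by rewrite mem_index_iota ba ltnS ar => /(_ isT isT).
Qed.

Section Lagrange.
Variables (R : idomainType) (r : nat) (u : nat -> R).
Hypothesis u_subr_unit : forall a b, (1 <= a <= r)%N -> (1 <= b <= r)%N -> a != b ->
  u a - u b \is a GRing.unit.

Definition lagr (c : nat) : {poly R} :=
  \prod_(1 <= j < r.+1 | j != c) ((u c - u j)^-1 *: ('X - (u j)%:P)).

Lemma horner_lagr c d : (1 <= c <= r)%N -> (1 <= d <= r)%N ->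
  (lagr c).[u d] = (c == d)%:R.
Proof.
move=> hc hd; rewrite /lagr horner_prod; case: eqP => [<-|/eqP cd].
  rewrite big_nat_cond big1 // => j /andP[/andP[j1 jr] jc].
  by rewrite hornerZ hornerXsubC mulVr // u_subr_unit // 1?eq_sym // j1 -ltnS.
rewrite big_mkcond (bigD1_seq d) ?mem_index_iota ?iota_uniq //=.
by rewrite eq_sym cd hornerZ hornerXsubC subrr mulr0 mul0r.
Qed.

Lemma size_lagr c : (1 <= c <= r)%N -> (size (lagr c) <= r)%N.
Proof.
move=> hc; rewrite /lagr scaler_prod; apply: leq_trans (size_scale_leq _ _) _.
rewrite -big_filter size_prod_XsubC size_filter.
have := count_predC (pred1 c) (index_iota 1 r.+1).
rewrite size_iota subSS subn0 count_uniq_mem ?iota_uniq // mem_index_iota ltnS hc.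
by move=> /esym r_eq; rewrite [in leqRHS]r_eq.
Qed.

Lemma sum_lagr : (0 < r)%N -> \sum_(1 <= c < r.+1) lagr c = 1.
Proof.
move=> r_gt0; apply/eqP; rewrite -subr_eq0; apply/negPn/negP => nz.
pose us := [seq u j | j <- index_iota 1 r.+1].
have us_roots : all (root (\sum_(1 <= c < r.+1) lagr c - 1)) us.
  apply/allP => z /mapP[d]; rewrite mem_index_iota ltnS => hd ->.
  rewrite /root hornerD hornerN hornerC horner_sum.
  rewrite (eq_big_nat _ _ (F2 := fun c => (c == d)%:R)); last first.
    by move=> c; rewrite ltnS => hc; rewrite horner_lagr.
  rewrite (bigD1_seq d) ?mem_index_iota ?iota_uniq ?ltnS //= eqxx big1 ?addr0 ?subrr //.
  by move=> c /negPf ->.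
have us_uniq : uniq us.
  rewrite map_inj_in_uniq ?iota_uniq // => a b; rewrite !mem_index_iota !ltnS.
  move=> ha hb /eqP; apply: contraTeq => ab; rewrite -subr_eq0.
  by apply/negP => /eqP uab; move: (u_subr_unit ha hb ab); rewrite uab unitr0.
have := max_poly_roots nz us_roots us_uniq; rewrite size_map size_iota subSS subn0.
apply/negP; rewrite -leqNgt; apply: leq_trans (size_polyD _ _) _.
rewrite geq_max size_polyN size_poly1 r_gt0 andbT.
apply: leq_trans (size_sum _ _ _) _; rewrite big_seq_cond.
elim/big_ind: _ => // [p p' hp hp'|c]; first by rewrite geq_max hp hp'.
by rewrite mem_index_iota ltnS => /andP[hc _]; apply: size_lagr.
Qed.

Lemma horner_alg_lagr (A : algType R) (x : A) c :
  horner_alg x (lagr c) = \prod_(1 <= j < r.+1 | j != c) ((u c - u j)^-1 *: (x - (u j)%:A)).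
Proof.
rewrite rmorph_prod; apply: eq_bigr => j _.
by rewrite -mul_polyC rmorphM /= horner_algC rmorphB /= horner_algX horner_algC mulr_algl.
Qed.

Lemma lagr_eigen (A : algType R) (x : A) c :
  \prod_(1 <= j < r.+1) (x - (u j)%:A) = 0 -> (1 <= c <= r)%N ->
  x * horner_alg x (lagr c) = u c *: horner_alg x (lagr c).
Proof.
move=> x_ann hc.
have XsubC_lagr : ('X - (u c)%:P) * lagr c =
    (\prod_(1 <= j < r.+1 | j != c) (u c - u j)^-1) *: \prod_(1 <= j < r.+1) ('X - (u j)%:P).
  rewrite /lagr scaler_prod -scalerAr; congr (_ *: _).
  by rewrite [RHS](bigD1_seq c) ?mem_index_iota ?iota_uniq // ltnS.
have := congr1 (horner_alg x) XsubC_lagr.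
rewrite rmorphM rmorphB /= horner_algX horner_algC -mul_polyC rmorphM /= horner_algC mulr_algl.
rewrite [horner_alg x (\prod_(1 <= j < r.+1) _)]rmorph_prod.
rewrite (eq_bigr (fun j => x - (u j)%:A)); last first.
  by move=> j _; rewrite rmorphB /= horner_algX horner_algC.
by rewrite x_ann scaler0 mulrBl mulr_algl => /eqP; rewrite subr_eq0 => /eqP.
Qed.

End Lagrange.

Lemma sum_nat_delta (R : pzSemiRingType) (m N a : nat) (f : nat -> R) :
  \sum_(m <= c < N) (c == a)%:R * f c = (m <= a < N)%:R * f a.
Proof.
rewrite (eq_bigr (fun c => if c == a then f c else 0)); last first.
  by move=> c _; case: eqP; rewrite ?mul1r ?mul0r.
by rewrite -big_mkcond big_nat1_eq; case: ifP; rewrite ?mul1r ?mul0r.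
Qed.

Section LinearCombination.
Variables (R : comPzRingType) (V : lmodType R).

Definition lincomb (ws : seq V) (c : nat -> R) : V := \sum_(i < size ws) c i *: ws`_i.

Lemma lincombD ws c c' :
  lincomb ws c + lincomb ws c' = lincomb ws (fun i => c i + c' i).
Proof. by rewrite /lincomb -big_split; apply: eq_bigr => i _; rewrite scalerDl. Qed.

Lemma lincombZ ws a c : a *: lincomb ws c = lincomb ws (fun i => a * c i).
Proof. by rewrite /lincomb scaler_sumr; apply: eq_bigr => i _; rewrite scalerA. Qed.

Lemma lincombN ws c : - lincomb ws c = lincomb ws (fun i => - c i).
Proof. by rewrite /lincomb -sumrN; apply: eq_bigr => i _; rewrite scaleNr. Qed.

Lemma lincomb_nth ws j : (j < size ws)%N -> ws`_j = lincomb ws (fun i => (i == j)%:R).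
Proof.
move=> lt_j; rewrite /lincomb (bigD1 (Ordinal lt_j)) //= eqxx scale1r big1 ?addr0 //.
by move=> i neq_ij; rewrite (_ : (i == j :> nat) = false) ?scale0r //; exact: negPf neq_ij.
Qed.

Lemma eq_lincomb ws c c' :
  all (fun i => c i == c' i) (iota 0 (size ws)) -> lincomb ws c = lincomb ws c'.
Proof.
move=> /allP eq_c; apply: eq_bigr => i _; congr (_ *: _); apply/eqP/eq_c.
by rewrite mem_iota add0n ltn_ord.
Qed.

Lemma eq_via_subr (x y x' y' : V) : x' = y' -> x - y = x' - y' -> x = y.
Proof. by move=> <-; rewrite subrr => /eqP; rewrite subr_eq0 => /eqP. Qed.

End LinearCombination.

Ltac lincomb_fold_vectors ws l k :=
  match l with
  | ?v :: ?l' => try rewrite -[v]/(nth 0%R ws k); lincomb_fold_vectors ws l' (S k)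
  | _ => idtac
  end.

(* [ws] must be a local definition [pose ws := [:: v_0; ...; v_m]] listing every
   vector of the goal, larger terms before their subterms; the goal, an identity
   between R-linear combinations of the [v_i], is proved by comparing coefficients,
   each comparison being closed by [tac]. *)
Tactic Notation "lincomb_by" constr(ws) tactic3(tac) :=
  let l := eval unfold ws in ws in lincomb_fold_vectors ws l 0%N;
  rewrite !(lincomb_nth (ws := ws)) //;
  repeat (first [rewrite lincombZ | rewrite lincombN | rewrite lincombD]);
  apply: eq_lincomb; rewrite /ws /= ?andbT; repeat (apply/andP; split); apply/eqP; tac.

Section Tuples.
Variables (n r : nat).
Implicit Types (k l : {ffun 'I_n -> 'I_r}).

Lemma kvalS k (x : 'I_n) : kval k x.+1 = (k x).+1.
Proof. by rewrite /kval /= valK. Qed.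

Lemma eq_kval k l : (forall m, (1 <= m <= n)%N -> kval k m = kval l m) -> k = l.
Proof.
move=> eq_kl; apply/ffunP => x; apply/val_inj.
by have := eq_kl x.+1; rewrite !kvalS => /(_ (ltn_ord x)) [].
Qed.

Lemma kval_range k m : (1 <= m <= n)%N -> (1 <= kval k m <= r)%N.
Proof. by case: m => // m /= lt_mn; rewrite (kvalS k (Ordinal lt_mn)) /=. Qed.

Definition swn (i m : nat) : nat := if m == i then i.+1 else if m == i.+1 then i else m.

(* [sw i k] is [k] with its (1-based) entries i and i+1 exchanged. *)
Definition sw (i : nat) k : {ffun 'I_n -> 'I_r} :=
  [ffun x : 'I_n => k (insubd x (swn i x.+1).-1)].

Lemma kval_sw i k m : (1 <= i < n)%N -> (1 <= m <= n)%N -> kval (sw i k) m = kval k (swn i m).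
Proof.
case: m => // m /andP[i1 lt_in] /= lt_mn; rewrite (kvalS _ (Ordinal lt_mn)) ffunE.
have swn_gt0 : (0 < swn i m.+1)%N by rewrite /swn; do 2!case: eqP => //; lia.
have swn_le : (swn i m.+1 <= n)%N by rewrite /swn; do 2!case: eqP => //; lia.
have lt_pred : ((swn i m.+1).-1 < n)%N by rewrite prednK.
by rewrite -[in RHS](prednK swn_gt0) -[in RHS](insubdK (Ordinal lt_mn) lt_pred) kvalS.
Qed.

Lemma kval_swl i k : (1 <= i < n)%N -> kval (sw i k) i = kval k i.+1.
Proof. by move=> hi; rewrite kval_sw ?/swn ?eqxx //; lia. Qed.

Lemma kval_swr i k : (1 <= i < n)%N -> kval (sw i k) i.+1 = kval k i.
Proof. by move=> hi; rewrite kval_sw ?/swn ?eqxx ?(gtn_eqF (ltnSn i)) //; lia. Qed.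

Lemma kval_sw_other i k m : (1 <= i < n)%N -> (1 <= m <= n)%N -> m != i -> m != i.+1 ->
  kval (sw i k) m = kval k m.
Proof. by move=> hi hm mi mSi; rewrite kval_sw // /swn (negPf mi) (negPf mSi). Qed.

Lemma sw_id i k : (1 <= i < n)%N -> kval k i = kval k i.+1 -> sw i k = k.
Proof.
move=> hi eq_k; apply: eq_kval => m hm; rewrite kval_sw // /swn.
by case: eqP => [->|_]; [|case: eqP => [->|]].
Qed.

Lemma neq_sw i k l : (1 <= i < n)%N -> l != sw i k ->
  exists2 m, (1 <= m <= n)%N & kval l m != kval k (swn i m).
Proof.
move=> hi neq_lk.
have /existsP[x neq_x] : [exists x : 'I_n, kval l x.+1 != kval k (swn i x.+1)].
  rewrite -negb_forall; apply: contra neq_lk => /forallP eq_lk.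
  apply/eqP/eq_kval => -[//|m] /= lt_mn; rewrite kval_sw //.
  exact/eqP/(eq_lk (Ordinal lt_mn)).
by exists x.+1; rewrite //= ltn_ord.
Qed.

End Tuples.

Section WeightIdempotents.
Variables (R : idomainType) (A : algType R) (n r : nat) (u : nat -> R) (t : nat -> A).
Hypothesis r_gt0 : (0 < r)%N.
Hypothesis u_subr_unit : forall a b, (1 <= a <= r)%N -> (1 <= b <= r)%N -> a != b ->
  u a - u b \is a GRing.unit.
Hypothesis t_ann : forall i, (1 <= i <= n)%N -> \prod_(1 <= c < r.+1) (t i - (u c)%:A) = 0.
Hypothesis t_comm : forall i j, (1 <= i <= n)%N -> (1 <= j <= n)%N -> t i * t j = t j * t i.

Notation b := (@bk _ _ n r u t).
Implicit Types (k l : {ffun 'I_n -> 'I_r}).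

Lemma bkE k : b k = \prod_(i < n) horner_alg (t i.+1) (lagr r u (k i).+1).
Proof. by apply: eq_bigr => i _; rewrite horner_alg_lagr. Qed.

Lemma commr_t_lagr m j c : (1 <= m <= n)%N -> (1 <= j <= n)%N ->
  GRing.comm (t m) (horner_alg (t j) (lagr r u c)).
Proof. by move=> hm hj; apply/commr_horner_alg/t_comm. Qed.

Lemma t_b m k : (1 <= m <= n)%N -> t m * b k = u (kval k m) *: b k.
Proof.
case: m => // m /= lt_mn; rewrite (kvalS k (Ordinal lt_mn)) bkE.
apply: (mul_prod_eigen (mem_index_enum (Ordinal lt_mn))).
  by move=> i; apply: commr_t_lagr; rewrite //= ltn_ord.
by rewrite lagr_eigen ?t_ann //= ltn_ord.
Qed.

Lemma b_t m k : (1 <= m <= n)%N -> b k * t m = u (kval k m) *: b k.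
Proof.
move=> hm; rewrite -t_b // bkE; apply/esym/commr_prod => i _.
by apply: commr_t_lagr; rewrite //= ltn_ord.
Qed.

Lemma b_orth l k : b l * b k = (l == k)%:R *: b k.
Proof.
have lagr_b (i : 'I_n) :
    horner_alg (t i.+1) (lagr r u (l i).+1) * b k = ((l i).+1 == (k i).+1)%:R *: b k.
  by rewrite (horner_alg_eigen _ (t_b _ _)) ?kvalS ?horner_lagr //= ltn_ord.
rewrite [b l]bkE (prod_mul_eigen _ lagr_b); case: eqP => [->|/eqP neq_lk].
  by rewrite big1 ?scale1r // => i _; rewrite eqxx.
have [x neq_x] : exists x, l x != k x.
  by apply/existsP; apply: contraNT neq_lk; rewrite negb_exists => /forallP eq_lk;
    apply/eqP/ffunP => x; apply/eqP/negPn/eq_lk.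
rewrite (bigD1 x) //= eqSS (_ : (l x == k x :> nat) = false) ?mul0r ?scale0r //.
exact: negPf neq_x.
Qed.

Lemma sum_b : \sum_k b k = 1.
Proof.
under eq_bigr do rewrite bkE.
rewrite -(bigA_distr_bigA (fun (i : 'I_n) (c : 'I_r) => horner_alg (t i.+1) (lagr r u c.+1))).
apply: big1 => i _; rewrite -rmorph_sum.
have -> : \sum_(c < r) lagr r u c.+1 = \sum_(1 <= c < r.+1) lagr r u c.
  by rewrite big_add1 /= big_mkord.
by rewrite sum_lagr // rmorph1.
Qed.

End WeightIdempotents.

Section ShojiGenerators.
Variables (R : idomainType) (A : algType R) (n r : nat)
  (q : R) (u : nat -> R) (F : nat -> {poly R}) (t T : nat -> A).
Hypothesis r_gt0 : (0 < r)%N.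
Hypothesis Delta_unit : Delta r u \is a GRing.unit.
Hypothesis F_sample : forall c c', (1 <= c <= r)%N -> (1 <= c' <= r)%N ->
  (F c).[u c'] = (if c == c' then Delta r u else 0).
Hypothesis t_ann : forall i, (1 <= i <= n)%N -> \prod_(1 <= c < r.+1) (t i - (u c)%:A) = 0.
Hypothesis t_comm : forall i j, (1 <= i <= n)%N -> (1 <= j <= n)%N -> t i * t j = t j * t i.
Hypothesis T_t : forall j k, (1 <= j <= n.-1)%N -> (1 <= k <= n)%N -> k != j -> k != j.+1 ->
  T j * t k = t k * T j.
Hypothesis T_tS : forall j, (2 <= j <= n)%N ->
  T j.-1 * t j = t j.-1 * T j.-1 + corr r q u F t j.
Hypothesis T_tP : forall j, (2 <= j <= n)%N ->
  T j.-1 * t j.-1 = t j * T j.-1 - corr r q u F t j.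

Let u_subr_unit a b := @Delta_unit_subr R r u a b Delta_unit.
Let t_b := t_b t_ann t_comm.
Let b_t := b_t t_ann t_comm.
Let b_orth := b_orth u_subr_unit t_ann t_comm.
Let sum_b := sum_b n t r_gt0 u_subr_unit.

Notation b := (@bk _ _ n r u t).
Notation g i := (gg n r q u t T i).
Notation D := (q - q^-1).
Implicit Types (k l : {ffun 'I_n -> 'I_r}).

Definition eps i k : R := - D * (kval k i < kval k i.+1)%:R.

Lemma Bp_b i k : Bp n r q u t i i.+1 * b k = eps i k *: b k.
Proof.
rewrite /Bp -scalerAl mulr_suml (eq_bigr (fun l => (l == k)%:R *: b k)); last first.
  by move=> l _; rewrite b_orth.
rewrite -scaler_suml scalerA /eps; congr (_ * _ *: _).
rewrite (eq_bigr (fun l => if l == k then 1 else 0)); last by move=> l _; case: eqP.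
rewrite -big_mkcondr; case lt_k : (kval k i < kval k i.+1)%N.
  by rewrite (big_pred1 k) // => l /=; case: eqP => [->|]; rewrite ?lt_k ?andbF.
by rewrite big_pred0 // => l /=; case: eqP => [->|]; rewrite ?lt_k ?andbF.
Qed.

Lemma corr_b i k : (1 <= i < n)%N ->
  corr r q u F t i.+1 * b k = ((u (kval k i) - u (kval k i.+1)) * eps i k) *: b k.
Proof.
move=> hi; have hi' : (1 <= i <= n)%N by lia.
have hSi : (1 <= i.+1 <= n)%N by lia.
set a := kval k i; set c := kval k i.+1.
have ha : (1 <= a <= r)%N by apply: kval_range.
have hc : (1 <= c <= r)%N by apply: kval_range.
have F_b m c1 : (1 <= m <= n)%N -> (1 <= c1 <= r)%N ->
    aeval (F c1) (t m) * b k = ((c1 == kval k m)%:R * Delta r u) *: b k.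
  move=> hm hc1; rewrite aevalE (horner_alg_eigen _ (t_b _ hm)) F_sample ?kval_range //.
  by case: eqP; rewrite ?mul1r ?mul0r.
rewrite /corr /= -scalerAl mulr_suml.
rewrite (eq_big_nat _ _ (F2 := fun c1 =>
    ((c1 == a)%:R * ((c1 < c)%:R * (Delta r u ^+ 2 * ((u c - u c1) * D)))) *: b k)); last first.
  move=> c1 hc1; rewrite mulr_suml.
  rewrite (eq_big_nat _ _ (F2 := fun c2 =>
      ((c2 == c)%:R * ((c1 == a)%:R * (Delta r u ^+ 2 * ((u c2 - u c1) * D)))) *: b k)).
    by rewrite -scaler_suml sum_nat_delta ltnS (andP hc).2 andbT mulrCA.
  move=> c2 hc2; rewrite -scalerAl -mulrA F_b; [|by []|lia].
  by rewrite -scalerAr F_b; [rewrite !scalerA; congr (_ *: _); ring|by []|lia].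
rewrite -scaler_suml sum_nat_delta ltnS ha mulr1n mul1r scalerA; congr (_ *: _).
have Delta2K : Delta r u ^- 2 * Delta r u ^+ 2 = 1 by rewrite mulVr ?unitrX.
transitivity (Delta r u ^- 2 * Delta r u ^+ 2 * ((a < c)%:R * ((u c - u a) * D))).
  by ring.
by rewrite Delta2K /eps; ring.
Qed.

Section Intertwining.
Variables (i : nat) (l k : {ffun 'I_n -> 'I_r}).
Hypothesis hi : (1 <= i < n)%N.

Let hi_n : (1 <= i <= n)%N. Proof. by lia. Qed.
Let hSi_n : (1 <= i.+1 <= n)%N. Proof. by lia. Qed.
Let hSi_2 : (2 <= i.+1 <= n)%N. Proof. by lia. Qed.

Let X := b l * T i * b k.
Let c_k := (l == k)%:R * ((u (kval k i) - u (kval k i.+1)) * eps i k).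

Let b_corr_b : b l * corr r q u F t i.+1 * b k = c_k *: b k.
Proof. by rewrite -mulrA corr_b // -scalerAr b_orth scalerA mulrC. Qed.

Lemma bTb_tS : u (kval k i.+1) *: X = u (kval l i) *: X + c_k *: b k.
Proof.
have := congr1 (fun z => b l * z * b k) (T_tS hSi_2); rewrite /= mulrDr mulrDl b_corr_b.
by rewrite -mulrA -[T i * _ * _]mulrA t_b // !mulrA b_t // -!scalerAl -scalerAr.
Qed.

Lemma bTb_t : u (kval k i) *: X = u (kval l i.+1) *: X - c_k *: b k.
Proof.
have := congr1 (fun z => b l * z * b k) (T_tP hSi_2); rewrite /= mulrBr mulrBl b_corr_b.
by rewrite -mulrA -[T i * _ * _]mulrA t_b // !mulrA b_t // -!scalerAl -scalerAr.
Qed.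

Lemma bTb_t_other m : (1 <= m <= n)%N -> m != i -> m != i.+1 ->
  u (kval k m) *: X = u (kval l m) *: X.
Proof.
move=> hm mi mSi; rewrite /X scalerAr -t_b // !scalerAl -b_t // -!mulrA.
by congr (_ * _); rewrite !mulrA T_t //; lia.
Qed.

(* Unless l = s_i k, some t_m acts on the two sides of [X] by distinct scalars, so
   [X] = 0; if l = k = s_i k, then k_i <> k_{i+1} and [X] cancels the B' term. *)
Lemma bgb_eq0 : l != sw i k -> b l * g i * b k = 0.
Proof.
move=> neq_lk; rewrite /gg mulrDr mulrDl -[X in _ + X]mulrA Bp_b -scalerAr b_orth scalerA -/X.
have X_eq0 a a' : (1 <= a <= r)%N -> (1 <= a' <= r)%N -> a != a' -> u a *: X = u a' *: X -> X = 0.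
  move=> ha ha' neq_a /eqP; rewrite -subr_eq0 -scalerBl => /eqP.
  exact: scaler_unit_eq0 (u_subr_unit ha ha' neq_a).
have [eq_kl|neq_kl] := eqVneq k l.
  move: neq_lk bTb_tS; rewrite /c_k -eq_kl eqxx mulr1n mul1r mulr1 => neq_kk bTb_tS.
  have neq_k : kval k i.+1 != kval k i by apply: contra neq_kk => /eqP eq_k; rewrite sw_id.
  apply: (scaler_unit_eq0 (u_subr_unit (kval_range _ hSi_n) (kval_range _ hi_n) neq_k)).
  rewrite scalerDr scalerBl bTb_tS [u _ *: X + _]addrC addrK scalerA -scalerDl.
  by rewrite [_ + _](_ : _ = 0) ?scale0r //; ring.
have ck_eq0 : c_k = 0.
  by rewrite /c_k (_ : l == k = false) ?mul0r //; apply/negbTE; rewrite eq_sym.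
suff -> : X = 0 by rewrite mulr0n mulr0 scale0r addr0.
have [m hm] := neq_sw hi neq_lk; rewrite /swn.
case: (m =P i) => [->|/eqP mi]; last case: (m =P i.+1) => [->|/eqP mSi].
- rewrite /= eq_sym => /X_eq0; apply; rewrite ?kval_range //.
  by rewrite bTb_tS ck_eq0 scale0r addr0.
- rewrite /= eq_sym => /X_eq0; apply; rewrite ?kval_range //.
  by rewrite bTb_t ck_eq0 scale0r subr0.
- rewrite /= eq_sym => /X_eq0; apply; rewrite ?kval_range //.
  exact: bTb_t_other.
Qed.

End Intertwining.

Lemma g_b i k : (1 <= i < n)%N -> g i * b k = b (sw i k) * (g i * b k).
Proof.
move=> hi; rewrite -{1}[g i * b k]mul1r -sum_b mulr_suml (bigD1 (sw i k)) //=.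
by rewrite big1 ?addr0 ?mulrA // => l neq_l; rewrite mulrA bgb_eq0.
Qed.

Definition in_block l (x : A) := b l * x = x.

Lemma in_block_b k : in_block k (b k).
Proof. by rewrite /in_block b_orth eqxx scale1r. Qed.

Lemma in_block_g i l x : (1 <= i < n)%N -> in_block l x -> in_block (sw i l) (g i * x).
Proof.
move=> hi bx; rewrite /in_block -bx !mulrA; congr (_ * x).
by rewrite [RHS](g_b _ hi) mulrA.
Qed.

Lemma T_block i l x : in_block l x -> T i * x = g i * x - eps i l *: x.
Proof.
move=> bx; have Bp_x : Bp n r q u t i i.+1 * x = eps i l *: x.
  by rewrite -bx mulrA Bp_b -scalerAl.
by rewrite /gg mulrDl Bp_x addrK.
Qed.

Lemma eq_by_blocks (x y : A) : (forall k, x * b k = y * b k) -> x = y.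
Proof.
move=> xy; rewrite -[x]mulr1 -[y]mulr1 -sum_b !mulr_sumr.
by apply: eq_bigr => k _.
Qed.

Lemma eps_sw_far i j k : (1 <= i < n)%N -> (1 <= j < n)%N -> ((i.+1 < j) || (j.+1 < i))%N ->
  eps i (sw j k) = eps i k.
Proof. by move=> hi hj far; rewrite /eps !kval_sw_other //; lia. Qed.

Lemma g_comm_far i j : (1 <= i < n)%N -> (1 <= j < n)%N -> ((i.+1 < j) || (j.+1 < i))%N ->
  T i * T j = T j * T i -> g i * g j = g j * g i.
Proof.
move=> hi hj far T_ij; apply: eq_by_blocks => k; rewrite -!mulrA.
have bk := in_block_b k.
have := congr1 (fun z => z * b k) T_ij; rewrite /= -!mulrA (T_block _ bk) (T_block _ bk).
rewrite !mulrBr -!scalerAr (T_block _ (in_block_g hj bk)) (T_block _ (in_block_g hi bk)).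
rewrite !(T_block _ bk) !eps_sw_far //; last by rewrite orbC.
move=> T_ij_k; apply: (eq_via_subr T_ij_k).
pose ws := [:: g i * (g j * b k); g j * (g i * b k); g i * b k; g j * b k; b k].
lincomb_by ws ring.
Qed.

Section Quadratic.
Hypothesis q_unit : q \is a GRing.unit.
Hypothesis T_quad : forall i, (1 <= i <= n.-1)%N -> (T i - q%:A) * (T i + q^-1%:A) = 0.

Lemma T_sq i : (1 <= i < n)%N -> T i * T i = D *: T i + 1.
Proof.
move=> hi; have hi' : (1 <= i <= n.-1)%N by lia.
have := T_quad hi'; rewrite mulrBl !mulrDr.
rewrite mulr_algr !mulr_algl scalerA mulrV // scale1r => /eqP; rewrite subr_eq0 => /eqP e.
by apply: (addIr (q^-1 *: T i)); rewrite e scalerBl addrAC subrK.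
Qed.

Lemma g_sq_block i l x : (1 <= i < n)%N -> in_block l x ->
  g i * (g i * x) = (D + eps i l + eps i (sw i l)) *: (g i * x) +
                    (1 - eps i l ^+ 2 - D * eps i l) *: x.
Proof.
move=> hi bx; have := T_sq hi => /(congr1 (fun y => y * x)) /=.
rewrite -mulrA mulrDl mul1r -scalerAl (T_block _ bx) mulrBr -scalerAr (T_block _ bx).
rewrite (T_block _ (in_block_g hi bx)) => T_sq_x; apply: (eq_via_subr T_sq_x).
pose ws := [:: g i * (g i * x); g i * x; x].
lincomb_by ws ring.
Qed.

Lemma g_braid i : (1 <= i)%N -> (i.+1 < n)%N ->
  T i * T i.+1 * T i = T i.+1 * T i * T i.+1 -> g i * g i.+1 * g i = g i.+1 * g i * g i.+1.
Proof.
move=> i1 lt_Sin T_braid; have hi : (1 <= i < n)%N by lia.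
have hSi : (1 <= i.+1 < n)%N by lia.
have Ki0 l : kval (sw i l) i = kval l i.+1 by rewrite kval_swl.
have Ki1 l : kval (sw i l) i.+1 = kval l i by rewrite kval_swr.
have Ki2 l : kval (sw i l) i.+2 = kval l i.+2 by rewrite kval_sw_other //; lia.
have Kj0 l : kval (sw i.+1 l) i = kval l i by rewrite kval_sw_other //; lia.
have Kj1 l : kval (sw i.+1 l) i.+1 = kval l i.+2 by rewrite kval_swl.
have Kj2 l : kval (sw i.+1 l) i.+2 = kval l i.+1 by rewrite kval_swr.
apply: eq_by_blocks => k; rewrite -!mulrA.
have b0 := in_block_b k.
have b1 := in_block_g hi b0; have b2 := in_block_g hSi b0.
have b21 := in_block_g hSi b1; have b12 := in_block_g hi b2.
have := congr1 (fun z => z * b k) T_braid; rewrite /= -!mulrA.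
repeat progress rewrite ?mulrBr -?scalerAr ?(T_block _ b0) ?(T_block _ b1) ?(T_block _ b2)
  ?(T_block _ b21) ?(T_block _ b12) ?(g_sq_block hi b0) ?(g_sq_block hSi b0).
rewrite /eps; repeat progress rewrite ?Ki0 ?Ki1 ?Ki2 ?Kj0 ?Kj1 ?Kj2.
move=> T_braid_k; apply: (eq_via_subr T_braid_k).
move: (kval k i) (kval k i.+1) (kval k i.+2) => a a' a''.
pose ws := [:: g i * (g i.+1 * (g i * b k)); g i.+1 * (g i * (g i.+1 * b k));
  g i.+1 * (g i * b k); g i * (g i.+1 * b k); g i * b k; g i.+1 * b k; b k].
lincomb_by ws (case: (ltngtP a a') => ?; case: (ltngtP a' a'') => ?;
  case: (ltngtP a a'') => ?; try (exfalso; lia); rewrite /=; ring).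
Qed.

End Quadratic.

End ShojiGenerators.

Unset Implicit Arguments.

Theorem proposition3p6 (R : idomainType) (A : algType R) (n r : nat)
  (q : R) (u : nat -> R) (F : nat -> {poly R}) (t T : nat -> A) :
  (2 <= n)%N -> (1 <= r)%N ->
  q \is a GRing.unit -> Delta r u \is a GRing.unit ->
  (forall c, (1 <= c <= r)%N -> (size (F c) <= r)%N) ->
  (forall c c', (1 <= c <= r)%N -> (1 <= c' <= r)%N ->
      (F c).[u c'] = (if c == c' then Delta r u else 0)) ->
  (forall i, (1 <= i <= n.-1)%N -> (T i - q%:A) * (T i + q^-1%:A) = 0) ->
  (forall i, (1 <= i <= n)%N -> \prod_(1 <= c < r.+1) (t i - (u c)%:A) = 0) ->
  (forall i, (1 <= i)%N -> (i.+1 <= n.-1)%N ->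
      T i * T i.+1 * T i = T i.+1 * T i * T i.+1) ->
  (forall i j, (1 <= i <= n.-1)%N -> (1 <= j <= n.-1)%N ->
      ((i.+1 < j) || (j.+1 < i))%N -> T i * T j = T j * T i) ->
  (forall i j, (1 <= i <= n)%N -> (1 <= j <= n)%N -> t i * t j = t j * t i) ->
  (forall j k, (1 <= j <= n.-1)%N -> (1 <= k <= n)%N -> k != j -> k != j.+1 ->
      T j * t k = t k * T j) ->
  (forall j, (2 <= j <= n)%N ->
      T j.-1 * t j = t j.-1 * T j.-1 + corr r q u F t j) ->
  (forall j, (2 <= j <= n)%N ->
      T j.-1 * t j.-1 = t j * T j.-1 - corr r q u F t j) ->
  (forall i j, (1 <= i <= n.-1)%N -> (1 <= j <= n.-1)%N -> ((i.+1 < j) || (j.+1 < i))%N ->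
      gg n r q u t T i * gg n r q u t T j = gg n r q u t T j * gg n r q u t T i) /\
  (forall i, (1 <= i)%N -> (i <= n - 2)%N ->
      gg n r q u t T i * gg n r q u t T i.+1 * gg n r q u t T i
      = gg n r q u t T i.+1 * gg n r q u t T i * gg n r q u t T i.+1).
Proof.
move=> _ r_gt0 q_unit Delta_unit _ F_sample T_quad t_ann T_braid T_comm t_comm T_t T_tS T_tP.
split=> [i j hi hj far | i i1 i_le].
  by apply: (g_comm_far (F := F)) => //; [lia | lia | exact: T_comm].
by apply: (g_braid (F := F)) => //; [lia | apply: T_braid => //; lia].
Qed.
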